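(* Let $p$ be a prime, $e\ge1$, and $G$ a finite abelian group of order $p^e$. Let $\psi^p\colon\mathbf{Z}[G]\to\mathbf{Z}[G]$ be the ring homomorphism with $\psi^p(g)=g^p$ for $g\in G$. If $\rho$ is a representation of level $k>0$ and there is no representation $\tau$ with $\psi\tau=\rho$, then $\psi^p(b_\rho)=0$.
   Context: A representation is a group homomorphism $\rho\colon G\to\mathbf{C}^*$; its level is $k$ if $\rho(G)$ has $p^k$ elements. For a representation $\tau$, $\psi\tau$ is the representation $x\mapsto\tau(x^p)$. Write $\omega=\exp(2\pi i/p)$. For $\rho$ of level $k>0$ set $b_\rho=\sum_{x\in G,\ \rho(x)=1}x-\sum_{\xi\in G,\ \rho(\xi)=\omega}\xi\in\mathbf{Z}[G]$. *)

From mathcomp Require Import all_boot all_order all_algebra all_fingroup all_field.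
Set Implicit Arguments. Unset Strict Implicit. Unset Printing Implicit Defensive.
Import GRing.Theory Num.Theory.
Local Open Scope ring_scope.

Definition is_rep (gT : finGroupType) (G : {group gT}) (rho : gT -> algC) :=
  {in G &, forall x y, rho (x * y)%g = rho x * rho y} /\ {in G, forall x, rho x != 0}.

Definition rep_level (gT : finGroupType) (G : {group gT}) (rho : gT -> algC)
  (p k : nat) : Prop :=
  size (undup [seq rho x | x in G]) = (p ^ k)%N.

Definition psi_rep (gT : finGroupType) (p : nat) (tau : gT -> algC) : gT -> algC :=
  fun x => tau (x ^+ p)%g.

(* omega = exp(2 pi i / p): p.-root (-1) is exp(i pi / p) (minimal nonnegative argument) *)
Definition omega (p : nat) : algC := (p.-root (-1)) ^+ 2.

(* Z[G]: elements are integer coefficient functions supported on G *)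
Definition grpring (gT : finGroupType) := {ffun gT -> int}.

(* psi^p on Z[G]: the additive (indeed ring) map with g |-> g^p *)
Definition psiP (gT : finGroupType) (G : {group gT}) (p : nat) (f : grpring gT)
  : grpring gT :=
  [ffun h => \sum_(g in G | (g ^+ p)%g == h) f g].

Definition b_rho (gT : finGroupType) (G : {group gT}) (p : nat) (rho : gT -> algC)
  : grpring gT :=
  [ffun x => ((x \in G) && (rho x == 1))%:R - ((x \in G) && (rho x == omega p))%:R].

From mathcomp Require Import all_boot all_order all_algebra all_fingroup all_field.
From mathcomp Require Import all_solvable all_character.
Set Implicit Arguments. Unset Strict Implicit. Unset Printing Implicit Defensive.
Import GRing.Theory Num.Theory.
Local Open Scope ring_scope.

(* If [rho] is nontrivial on some [z] with [z ^+ p = 1], then [rho z] is a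
   primitive [p]-th root of unity, so [omega] is a power of it; translation by
   [z] preserves every fibre of [x |-> x ^+ p] and multiplies [rho] by [rho z],
   so in each fibre the values [1] and [omega] are taken equally often and the
   coefficients of [psi^p(b_rho)] cancel.  Otherwise [rho] factors through
   [x |-> x ^+ p], i.e. it is a linear character of the subgroup ['Mho^1(G)] of
   [p]-th powers composed with [x |-> x ^+ p]; that character extends to [G]
   since [G] is abelian, giving [tau] with [psi tau = rho]. *)

Lemma omega_expr_p p : (0 < p)%N -> omega p ^+ p = 1.
Proof.
by move=> p_gt0; rewrite /omega -exprM mulnC exprM rootCK // sqrrN expr1n.
Qed.

Lemma prime_root_unity_primitive (R : idomainType) p (x : R) :
  prime p -> x ^+ p = 1 -> x != 1 -> p.-primitive_root x.
Proof.
move=> p_pr xp1 x_neq1; have [m prim_m m_dvd_p] := prim_order_exists (prime_gt0 p_pr) xp1.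
have /primeP[_ /(_ m m_dvd_p) /= /orP[/eqP m1|/eqP m_p]] := p_pr; last by rewrite -m_p.
by move: prim_m x_neq1; rewrite m1 => /prim_expr_order; rewrite expr1 => ->; rewrite eqxx.
Qed.

Section Representations.
Variables (gT : finGroupType) (G : {group gT}) (rho : gT -> algC).
Hypothesis rho_rep : is_rep G rho.

Lemma is_rep1 : rho 1%g = 1.
Proof.
have [rhoM rho_neq0] := rho_rep; apply: (mulfI (rho_neq0 _ (group1 G))).
by rewrite -rhoM ?mulg1 ?mulr1.
Qed.

Lemma is_repX n x : x \in G -> rho (x ^+ n)%g = rho x ^+ n.
Proof.
move=> Gx; elim: n => [|n IHn]; first by rewrite expg0 expr0 is_rep1.
by rewrite expgS exprS rho_rep.1 ?groupX // IHn.
Qed.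

Lemma is_repV x : x \in G -> rho x^-1 = (rho x)^-1.
Proof.
move=> Gx; apply: (mulIf (rho_rep.2 x Gx)).
by rewrite -rho_rep.1 ?groupV // mulVg is_rep1 mulVf ?rho_rep.2.
Qed.

End Representations.

Section PowerFibres.
Variables (gT : finGroupType) (G : {group gT}) (p : nat) (rho : gT -> algC).
Hypotheses (cGG : abelian G) (rho_rep : is_rep G rho).

Definition pow_fibre_count (h : gT) (a : algC) :=
  #|[pred g in G | ((g ^+ p)%g == h) && (rho g == a)]|.

Lemma psiP_b_rhoE h :
  psiP G p (b_rho G p rho) h
  = (pow_fibre_count h 1)%:R - (pow_fibre_count h (omega p))%:R.
Proof.
rewrite ffunE (eq_bigr _ (fun g _ => ffunE _ g)) sumrB.
have fibre_sum a : \sum_(g in G | (g ^+ p)%g == h) ((g \in G) && (rho g == a))%:R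
                   = (pow_fibre_count h a)%:R :> int.
  rewrite /pow_fibre_count -sum1_card natr_sum big_mkcond [RHS]big_mkcond /=.
  by apply: eq_bigr => g _; rewrite !inE; case: (g \in G) (_ == h) (rho g == a) => [] [] [].
by rewrite !fibre_sum.
Qed.

Variables (z : gT) (Gz : z \in G) (zp1 : (z ^+ p = 1)%g).

Lemma pow_fibre_count_mulr h a : pow_fibre_count h (a * rho z) = pow_fibre_count h a.
Proof.
rewrite /pow_fibre_count -!sum1_card (reindex_inj (mulIg z)); apply: eq_bigl => g /=.
rewrite !inE groupMr //; case Gg: (g \in G) => //=.
rewrite expgMn; last exact: (centsP cGG) g Gg z Gz.
by rewrite zp1 mulg1 rho_rep.1 // (inj_eq (mulIf (rho_rep.2 z Gz))).
Qed.

Lemma pow_fibre_count_exp h j : pow_fibre_count h (rho z ^+ j) = pow_fibre_count h 1.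
Proof. by elim: j => [|j IHj]; rewrite ?expr0 // exprSr pow_fibre_count_mulr. Qed.

Lemma psiP_b_rho_eq0 : prime p -> rho z != 1 -> psiP G p (b_rho G p rho) = 0.
Proof.
move=> p_pr rhoz_neq1.
have rhoz_prim : p.-primitive_root (rho z).
  by apply: prime_root_unity_primitive; rewrite // -(is_repX rho_rep) // zp1 (is_rep1 rho_rep).
have [j omegaE] := prim_rootP rhoz_prim (omega_expr_p (prime_gt0 p_pr)).
by apply/ffunP => h; rewrite psiP_b_rhoE omegaE pow_fibre_count_exp subrr ffunE.
Qed.

End PowerFibres.

Lemma lin_char_of_morph (gT : finGroupType) (H : {group gT}) (f : gT -> algC) :
  f 1%g = 1 -> {in H &, {morph f : x y / (x * y)%g >-> x * y}} ->
  exists2 phi : 'CF(H), phi \is a linear_char & {in H, phi =1 f}.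
Proof.
move=> f1 fM.
have rf : mx_repr H (fun x => (f x)%:M : 'M[algC]_1).
  by split=> [|x y Hx Hy]; rewrite ?f1 // -scalar_mxM fM.
exists (cfRepr (MxRepresentation rf)).
  by apply/andP; split; [exact: cfRepr_char | rewrite cfRepr1].
by move=> x Hx; rewrite cfunE Hx mulr1n mxtrace_scalar.
Qed.

Lemma abelian_lin_char_ext (gT : finGroupType) (G H : {group gT}) (phi : 'CF(H)) :
  abelian G -> H \subset G -> phi \is a linear_char ->
  exists2 chi : 'CF(G), chi \is a linear_char & 'Res[H] chi = phi.
Proof.
move=> cGG sHG /lin_char_irr/irrP[j ->].
have [i] := constt_cfInd_irr j sHG; rewrite constt_Ind_Res => ji.
have chi_lin : 'chi[G]_i \is a linear_char by apply/char_abelianP.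
exists 'chi_i => //; have /lin_char_irr/irrP[j' Res_chi] := cfRes_lin_char H chi_lin.
by move: ji; rewrite Res_chi constt_irr inE => /eqP->.
Qed.

Section PthRoot.
Variables (gT : finGroupType) (G : {group gT}) (p : nat) (rho : gT -> algC).
Hypotheses (pG : (p.-group G)%g) (cGG : abelian G) (rho_rep : is_rep G rho).
Hypothesis rho_torsion1 : {in G, forall z, (z ^+ p = 1)%g -> rho z = 1}.

(* Well defined on [p]-th powers: two [p]-th roots differ by [p]-torsion. *)
Definition rho_pth_root (y : gT) : algC :=
  if [pick x in G | (x ^+ p)%g == y] is Some x then rho x else 1.

Lemma rho_pth_rootE x : x \in G -> rho_pth_root (x ^+ p)%g = rho x.
Proof.
move=> Gx; rewrite /rho_pth_root; case: pickP => [x' /andP[Gx' /eqP x'p]|]; last first.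
  by move/(_ x); rewrite Gx eqxx.
have Gx'x : (x' * x^-1)%g \in G by rewrite groupM ?groupV.
have cx'x : commute x' x^-1 by apply: (centsP cGG) x' Gx' _ (groupVr Gx).
have := rho_torsion1 Gx'x; rewrite expgMn // expgVn x'p mulgV => /(_ erefl).
rewrite rho_rep.1 ?groupV // (is_repV rho_rep) // => /(canRL (divfK _)).
by rewrite mul1r; apply; exact: rho_rep.2.
Qed.

Lemma Mho1E : ('Mho^1(G))%g = [set (x ^+ p)%g | x in G].
Proof. by rewrite (MhoEabelian 1 pG cGG) expn1. Qed.

Lemma psi_rep_preimage :
  exists tau : gT -> algC, is_rep G tau /\ {in G, forall x, psi_rep p tau x = rho x}.
Proof.
have rho_rootM : {in ('Mho^1(G))%g &, {morph rho_pth_root : x y / (x * y)%g >-> x * y}}.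
  move=> y1 y2; rewrite Mho1E => /imsetP[x Gx ->] /imsetP[y Gy ->].
  rewrite -expgMn; last exact: (centsP cGG) x Gx y Gy.
  by rewrite !rho_pth_rootE ?groupM // rho_rep.1.
have rho_root1 : rho_pth_root 1%g = 1.
  by rewrite -(expg1n _ p) rho_pth_rootE ?(is_rep1 rho_rep).
have [phi phi_lin phiE] := lin_char_of_morph rho_root1 rho_rootM.
have [chi chi_lin Res_chi] := abelian_lin_char_ext cGG (Mho_sub 1 G) phi_lin.
exists chi; split; first by split; [exact: lin_charM | exact: lin_char_neq0].
move=> x Gx; have Mx : (x ^+ p)%g \in ('Mho^1(G))%g by rewrite Mho1E; apply: imset_f.
by rewrite /psi_rep -(cfResE _ (Mho_sub 1 G) Mx) Res_chi phiE // rho_pth_rootE.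
Qed.

End PthRoot.

Theorem mainTheorem4 (gT : finGroupType) (G : {group gT}) (p e k : nat)
  (rho : gT -> algC) :
  prime p -> (0 < e)%N -> abelian G -> #|G| = (p ^ e)%N ->
  is_rep G rho -> (0 < k)%N -> rep_level G rho p k ->
  ~ (exists tau : gT -> algC, is_rep G tau /\ {in G, forall x, psi_rep p tau x = rho x}) ->
  psiP G p (b_rho G p rho) = 0.
Proof.
move=> p_pr _ cGG cardG rho_rep _ _ no_tau.
have pG : (p.-group G)%g by rewrite /pgroup cardG pnatX pnat_id.
have [z /and3P[Gz /eqP zp1 rhoz_neq1] | rho_torsion1] :=
  pickP [pred z in G | ((z ^+ p)%g == 1%g) && (rho z != 1)].
  exact: (psiP_b_rho_eq0 cGG rho_rep Gz zp1 p_pr rhoz_neq1).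
case: no_tau; apply: psi_rep_preimage pG cGG rho_rep _ => z Gz zp1.
by apply/eqP; move: (rho_torsion1 z); rewrite /= Gz zp1 eqxx /= => /negbFE.
Qed.
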